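(* Let $b\ge 3$ be an integer and $D \subset \{0,\ldots,b-1\}$ with $2 \le \#D \le b-1$. Let $n \geq 1$ and $p$ be integers and let $\psi(n)>0$ satisfy $\psi(n) < b^{-n}/2$. Put $d_{l,n} = \frac{m_{l}}{(b-1)b^n}$ and $d_{r,n} = \frac{m_{r}}{(b-1)b^n}$. Using the convention that an open ball with non-positive radius is the empty set: (1) If $p b^{-n} \in L_{n} \setminus R_{n}$, then $B\left(\frac{p}{b^{n}},\psi(n)\right) \cap C(b,D) = B\left(\frac{p}{b^{n}} + d_{l,n},\psi(n)-d_{l,n}\right) \cap C(b,D)$. (2) If $p b^{-n} \in R_{n} \setminus L_{n}$, then $B\left(\frac{p}{b^{n}},\psi(n)\right) \cap C(b,D) = B\left(\frac{p}{b^{n}} - d_{r,n},\psi(n)-d_{r,n}\right) \cap C(b,D)$. (3) If $p b^{-n} \in L_{n} \cup R_{n}$, then $B\left(\frac{p}{b^{n}},\psi(n)\right) \cap C(b,D) = \left(B\left(\frac{p}{b^{n}} + d_{l,n},\psi(n)-d_{l,n}\right) \cup B\left(\frac{p}{b^{n}} - d_{r,n},\psi(n)-d_{r,n}\right) \right) \cap C(b,D)$. (4) If $p b^{-n} \notin L_{n} \cup R_{n}$, then $B\left(\frac{p}{b^{n}},\psi(n)\right) \cap C(b,D) = \emptyset$.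
   Context: $C(b,D)$ is the set of $x\in[0,1]$ whose base-$b$ expansion uses only digits from $D$. $B(x,r)$ denotes the open interval $(x-r,x+r)$. The $n$-th level $C_n(b,D) = \{\sum_{i\ge1} x_i b^{-i} \in [0,1] : x_i \in D \text{ for } i=1,\ldots,n\}$ is a union of $(\#D)^n$ closed intervals of length $b^{-n}$; $L_n$ is the set of left endpoints and $R_n$ the set of right endpoints of these intervals (a point may lie in both). $m_l = \min D$ and $m_r = b-1-\max D$. *)

From Stdlib Require Import Reals Lra Lia ZArith List.
Open Scope R_scope.

(* min D and max D (D nonempty, all entries < b). *)
Definition dmin (b : nat) (D : list nat) : nat := fold_right Nat.min b D.
Definition dmax (D : list nat) : nat := fold_right Nat.max 0%nat D.

Definition m_l (b : nat) (D : list nat) : nat := dmin b D.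
Definition m_r (b : nat) (D : list nat) : nat := (b - 1 - dmax D)%nat.

(* Value of the first n digits: sum_{i=1}^{n} a_i b^{-i}, where the digit
   a_i is stored as a (i-1). *)
Fixpoint prefix_val (b : nat) (a : nat -> nat) (n : nat) : R :=
  match n with
  | O => 0
  | S m => prefix_val b a m + INR (a m) / (INR b ^ (S m))
  end.

Definition Cantor (b : nat) (D : list nat) (x : R) : Prop :=
  0 <= x <= 1 /\
  exists a : nat -> nat,
    (forall k, In (a k) D) /\
    infinite_sum (fun k => INR (a k) / (INR b ^ (S k))) x.

Definition Cantor_level (b : nat) (D : list nat) (n : nat) (x : R) : Prop :=
  0 <= x <= 1 /\
  exists a : nat -> nat,
    (forall k, (a k < b)%nat) /\
    (forall k, (k < n)%nat -> In (a k) D) /\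
    infinite_sum (fun k => INR (a k) / (INR b ^ (S k))) x.

(* The intervals of C_n are [w, w + b^{-n}] where w = sum_{i=1}^n x_i b^{-i},
   x_i in D. L_n: left endpoints; R_n: right endpoints. *)
Definition Lends (b : nat) (D : list nat) (n : nat) (y : R) : Prop :=
  exists a : nat -> nat,
    (forall k, (k < n)%nat -> In (a k) D) /\ y = prefix_val b a n.

Definition Rends (b : nat) (D : list nat) (n : nat) (y : R) : Prop :=
  exists a : nat -> nat,
    (forall k, (k < n)%nat -> In (a k) D) /\ y = prefix_val b a n + / (INR b ^ n).

Definition oball (x r : R) (y : R) : Prop := x - r < y < x + r.

(** Cutting the expansion of a point [y] of [C(b,D)] after [n] digits gives a
    left endpoint [w = k / b^n] of a level-[n] interval, and since the
    remaining digits lie between [min D] and [max D], the geometric tail puts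
    [y] in [[w + d_l, w + b^-n - d_r]].  If moreover [|y - p / b^n| < b^-n / 2],
    the integer [k] can only be [p] or [p - 1]: either [p / b^n = w] is a left
    endpoint and [y >= p / b^n + d_l], or [p / b^n = w + b^-n] is a right
    endpoint and [y <= p / b^n - d_r]. *)

From Stdlib Require Import Reals ZArith List.
From Stdlib Require Import Lra Lia.
Open Scope R_scope.

Lemma dmin_le b D d : In d D -> (dmin b D <= d)%nat.
Proof.
  induction D as [|x D IH]; simpl; [tauto|].
  intros [->|Hd]; [lia|]. specialize (IH Hd). lia.
Qed.

Lemma dmax_ge D d : In d D -> (d <= dmax D)%nat.
Proof.
  induction D as [|x D IH]; simpl; [tauto|].
  intros [->|Hd]; [lia|]. specialize (IH Hd). lia.
Qed.

Lemma dmax_le_pred b D : (forall d, In d D -> (d < b)%nat) -> (dmax D <= b - 1)%nat.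
Proof.
  induction D as [|x D IH]; simpl; intros HD; [lia|].
  assert (x < b)%nat by (apply HD; left; reflexivity).
  assert (dmax D <= b - 1)%nat by (apply IH; intros; apply HD; right; assumption).
  lia.
Qed.

Lemma INR_m_r b D : (1 <= b)%nat -> (forall d, In d D -> (d < b)%nat) ->
  INR (m_r b D) = INR b - 1 - INR (dmax D).
Proof.
  intros Hb HD. pose proof (dmax_le_pred b D HD).
  unfold m_r. rewrite !minus_INR by lia. simpl. lra.
Qed.

Lemma Un_cv_const c : Un_cv (fun _ => c) c.
Proof. intros eps Heps. exists 0%nat. intros. unfold Rdist. rewrite Rminus_diag, Rabs_R0. lra. Qed.

Lemma Un_cv_inv_pow x : 1 < x -> Un_cv (fun N => / x ^ N) 0.
Proof.
  intros Hx eps Heps.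
  assert (Hq : Rabs (/ x) < 1).
  { rewrite Rabs_pos_eq by (left; apply Rinv_0_lt_compat; lra).
    rewrite <- Rinv_1. apply Rinv_lt_contravar; lra. }
  destruct (pow_lt_1_zero _ Hq eps Heps) as [N HN].
  exists N. intros m Hm. unfold Rdist. rewrite Rminus_0_r, <- pow_inv. now apply HN.
Qed.

Lemma Un_cv_geometric_tail w c T x : 1 < x ->
  Un_cv (fun N => w + c * (T - / x ^ N) / (x - 1)) (w + c * T / (x - 1)).
Proof.
  intros Hx.
  replace (w + c * T / (x - 1)) with (w + c * (T - 0) * / (x - 1)) by (unfold Rdiv; ring).
  apply CV_plus; [apply Un_cv_const|].
  apply (CV_mult (fun N => c * (T - / x ^ N)) (fun _ => / (x - 1))); [|apply Un_cv_const].
  apply (CV_mult (fun _ => c)); [apply Un_cv_const|].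
  apply CV_minus; [apply Un_cv_const|]. now apply Un_cv_inv_pow.
Qed.

Lemma Rle_cv_lim_eventually u v l m N0 : Un_cv u l -> Un_cv v m ->
  (forall N, (N0 <= N)%nat -> u N <= v N) -> l <= m.
Proof.
  intros Hu Hv Huv.
  apply Rle_cv_lim with (Un := fun N => u (N + N0)%nat) (Vn := fun N => v (N + N0)%nat).
  - intros N. apply Huv. lia.
  - now apply CV_shift'.
  - now apply CV_shift'.
Qed.

Lemma Z_eq_or_pred_of_window k p :
  IZR p - 3 / 2 < IZR k < IZR p + 1 / 2 -> k = p \/ k = (p - 1)%Z.
Proof.
  intros [Hlo Hhi].
  assert (Hlt : (k - p < 1)%Z) by (apply lt_IZR; rewrite minus_IZR; lra).
  assert (Hgt : (-2 < k - p)%Z) by (apply lt_IZR; rewrite minus_IZR; lra).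
  lia.
Qed.

Section DigitExpansion.

Variable b : nat.
Hypothesis Hb : (2 <= b)%nat.

Let b_gt1 : 1 < INR b.
Proof. apply lt_1_INR. lia. Qed.

Let pow_b_pos n : 0 < INR b ^ n.
Proof. apply pow_lt. lra. Qed.

Let digit_term (a : nat -> nat) (k : nat) : R := INR (a k) / INR b ^ S k.

Lemma prefix_val_partial_sum a N : sum_f_R0 (digit_term a) N = prefix_val b a (S N).
Proof.
  induction N as [|N IH]; simpl; [unfold digit_term; simpl; lra|].
  rewrite IH. reflexivity.
Qed.

Lemma prefix_val_cv a y :
  infinite_sum (digit_term a) y -> Un_cv (prefix_val b a) y.
Proof.
  intros Hs eps Heps. destruct (Hs eps Heps) as [N HN].
  exists (S N). intros [|m] Hm; [lia|].
  rewrite <- prefix_val_partial_sum. apply HN. lia.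
Qed.

Lemma prefix_val_int a n : exists k : Z, prefix_val b a n = IZR k / INR b ^ n.
Proof.
  induction n as [|n [k Hk]].
  - exists 0%Z. simpl. lra.
  - exists (k * Z.of_nat b + Z.of_nat (a n))%Z. simpl prefix_val. rewrite Hk.
    rewrite plus_IZR, mult_IZR, <- !INR_IZR_INZ. simpl pow.
    pose proof (pow_b_pos n). field. lra.
Qed.

Lemma prefix_val_increment_bounds a (lo hi : nat) n m :
  (forall k, (lo <= a k <= hi)%nat) ->
  INR lo * (/ INR b ^ n - / INR b ^ (n + m)) / (INR b - 1)
    <= prefix_val b a (n + m) - prefix_val b a n <=
  INR hi * (/ INR b ^ n - / INR b ^ (n + m)) / (INR b - 1).
Proof.
  intros Ha. induction m as [|m IH].
  - rewrite Nat.add_0_r. unfold Rdiv. lra.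
  - rewrite Nat.add_succ_r. simpl prefix_val. simpl pow.
    pose proof (pow_b_pos n). pose proof (pow_b_pos (n + m)).
    set (P := INR b ^ (n + m)) in *.
    assert (HP : 0 < INR b * P) by (apply Rmult_lt_0_compat; lra).
    assert (Estep : forall c, c * (/ INR b ^ n - / (INR b * P)) / (INR b - 1) =
               c * (/ INR b ^ n - / P) / (INR b - 1) + c / (INR b * P)).
    { intros c. field. repeat split; lra. }
    rewrite !Estep.
    destruct (Ha (n + m)%nat) as [Hlo Hhi]. apply le_INR in Hlo, Hhi.
    assert (INR lo / (INR b * P) <= INR (a (n + m)%nat) / (INR b * P))
      by (apply Rmult_le_compat_r; [left; apply Rinv_0_lt_compat|]; assumption).
    assert (INR (a (n + m)%nat) / (INR b * P) <= INR hi / (INR b * P))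
      by (apply Rmult_le_compat_r; [left; apply Rinv_0_lt_compat|]; assumption).
    lra.
Qed.

Lemma level_gap_nonneg c n : 0 <= INR c / ((INR b - 1) * INR b ^ n).
Proof.
  apply Rmult_le_pos; [apply pos_INR|].
  left. apply Rinv_0_lt_compat, Rmult_lt_0_compat; [lra | apply pow_b_pos].
Qed.

Lemma digit_expansion_bounds a (lo hi : nat) n y :
  (forall k, (lo <= a k <= hi)%nat) -> infinite_sum (digit_term a) y ->
  prefix_val b a n + INR lo / ((INR b - 1) * INR b ^ n) <= y <=
  prefix_val b a n + INR hi / ((INR b - 1) * INR b ^ n).
Proof.
  intros Ha Hs. pose proof (prefix_val_cv a y Hs) as Hcv.
  set (w := prefix_val b a n).
  assert (Hbound : forall N, (n <= N)%nat ->
    w + INR lo * (/ INR b ^ n - / INR b ^ N) / (INR b - 1) <= prefix_val b a N <=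
    w + INR hi * (/ INR b ^ n - / INR b ^ N) / (INR b - 1)).
  { intros N HN. replace N with (n + (N - n))%nat by lia.
    pose proof (prefix_val_increment_bounds a lo hi n (N - n) Ha). unfold w. lra. }
  assert (Elim : forall c : nat, INR c / ((INR b - 1) * INR b ^ n) =
                                  INR c * / INR b ^ n / (INR b - 1)).
  { intros c. pose proof (pow_b_pos n). field. lra. }
  rewrite !Elim. split.
  - apply (Rle_cv_lim_eventually _ _ _ _ n (Un_cv_geometric_tail w (INR lo) _ _ b_gt1) Hcv).
    intros N HN. apply Hbound, HN.
  - apply (Rle_cv_lim_eventually _ _ _ _ n Hcv (Un_cv_geometric_tail w (INR hi) _ _ b_gt1)).
    intros N HN. apply Hbound, HN.
Qed.

Variable D : list nat.
Hypothesis HD : forall d, In d D -> (d < b)%nat.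

Lemma Cantor_in_level_interval n y : Cantor b D y ->
  exists a, (forall k, In (a k) D) /\
    prefix_val b a n + INR (m_l b D) / ((INR b - 1) * INR b ^ n) <= y <=
    prefix_val b a n + / INR b ^ n - INR (m_r b D) / ((INR b - 1) * INR b ^ n).
Proof.
  intros [_ [a [Hin Hs]]]. exists a. split; [exact Hin|].
  assert (Ha : forall k, (m_l b D <= a k <= dmax D)%nat)
    by (intros k; split; [apply dmin_le | apply dmax_ge]; apply Hin).
  pose proof (digit_expansion_bounds a _ _ n y Ha Hs).
  assert (Er : / INR b ^ n - INR (m_r b D) / ((INR b - 1) * INR b ^ n) =
               INR (dmax D) / ((INR b - 1) * INR b ^ n)).
  { rewrite INR_m_r by (lia || exact HD). pose proof (pow_b_pos n). field. lra. }
  lra.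
Qed.

Lemma Cantor_ball_near_endpoint n p psi y :
  psi < / INR b ^ n / 2 ->
  oball (IZR p / INR b ^ n) psi y -> Cantor b D y ->
  (Lends b D n (IZR p / INR b ^ n) /\
     IZR p / INR b ^ n + INR (m_l b D) / ((INR b - 1) * INR b ^ n) <= y) \/
  (Rends b D n (IZR p / INR b ^ n) /\
     y <= IZR p / INR b ^ n - INR (m_r b D) / ((INR b - 1) * INR b ^ n)).
Proof.
  intros Hpsi Hball HC.
  destruct (Cantor_in_level_interval n y HC) as [a [Hin Hy]].
  destruct (prefix_val_int a n) as [k Hk].
  pose proof (pow_b_pos n) as HB.
  pose proof (level_gap_nonneg (m_l b D) n). pose proof (level_gap_nonneg (m_r b D) n).
  unfold oball in Hball. rewrite Hk in Hy.
  assert (Hwindow : IZR p - 3 / 2 < IZR k < IZR p + 1 / 2).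
  { pose proof (Rinv_0_lt_compat _ HB).
    split; apply (Rmult_lt_reg_r (/ INR b ^ n)); unfold Rdiv in *; lra. }
  destruct (Z_eq_or_pred_of_window k p Hwindow) as [-> | ->].
  - left. split; [|lra]. exists a. split; [intros; apply Hin | now rewrite Hk].
  - right. split.
    + exists a. split; [intros; apply Hin|]. rewrite Hk, minus_IZR. field. lra.
    + rewrite minus_IZR in Hy.
      assert ((IZR p - 1) / INR b ^ n + / INR b ^ n = IZR p / INR b ^ n) by (field; lra).
      lra.
Qed.

End DigitExpansion.

Theorem lemma3p2 (b : nat) (D : list nat) (n : nat) (p : Z) (psi : R) :
  (3 <= b)%nat ->
  NoDup D -> (forall d, In d D -> (d < b)%nat) ->
  (2 <= length D)%nat -> (length D <= b - 1)%nat ->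
  (1 <= n)%nat ->
  0 < psi -> psi < / (INR b ^ n) / 2 ->
  let x0 := IZR p / (INR b ^ n) in
  let dl := INR (m_l b D) / ((INR b - 1) * INR b ^ n) in
  let dr := INR (m_r b D) / ((INR b - 1) * INR b ^ n) in
  ((Lends b D n x0 /\ ~ Rends b D n x0) ->
     forall y, (oball x0 psi y /\ Cantor b D y) <->
               (oball (x0 + dl) (psi - dl) y /\ Cantor b D y)) /\
  ((Rends b D n x0 /\ ~ Lends b D n x0) ->
     forall y, (oball x0 psi y /\ Cantor b D y) <->
               (oball (x0 - dr) (psi - dr) y /\ Cantor b D y)) /\
  ((Lends b D n x0 \/ Rends b D n x0) ->
     forall y, (oball x0 psi y /\ Cantor b D y) <->
               ((oball (x0 + dl) (psi - dl) y \/ oball (x0 - dr) (psi - dr) y)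
                /\ Cantor b D y)) /\
  (~ (Lends b D n x0 \/ Rends b D n x0) ->
     forall y, ~ (oball x0 psi y /\ Cantor b D y)).
Proof.
  intros Hb _ HD _ _ _ _ Hpsi x0 dl dr.
  assert (Hb2 : (2 <= b)%nat) by lia.
  pose proof (level_gap_nonneg b Hb2 (m_l b D) n : 0 <= dl).
  pose proof (level_gap_nonneg b Hb2 (m_r b D) n : 0 <= dr).
  pose proof (fun y => Cantor_ball_near_endpoint b Hb2 D HD n p psi y Hpsi) as Hnear.
  fold x0 dl dr in Hnear. unfold oball in *.
  split; [|split; [|split]].
  - intros [HL HR] y. split; intros [Hy HC]; split; auto; [|lra].
    destruct (Hnear y Hy HC) as [[_ ?] | [? _]]; [lra | tauto].
  - intros [HR HL] y. split; intros [Hy HC]; split; auto; [|lra].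
    destruct (Hnear y Hy HC) as [[? _] | [_ ?]]; [tauto | lra].
  - intros _ y. split; intros [Hy HC]; split; auto; [|lra].
    destruct (Hnear y Hy HC) as [[_ ?] | [_ ?]]; [left | right]; lra.
  - intros HLR y [Hy HC]. destruct (Hnear y Hy HC) as [[? _] | [? _]]; tauto.
Qed.
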